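(* Let $\kappa$ be a regular cardinal and $G$ a graph. If there exists a cardinal $\lambda<\kappa$ such that $G$ is $(\kappa,\lambda)$-connected, then $K_\kappa$ is a minor of $G$.
   Context: A graph is a pair $(V,E)$ with $E\subseteq[V]^2$. For infinite cardinals $\kappa,\lambda$, a graph is $(\kappa,\lambda)$-connected if after the removal of any set of fewer than $\kappa$ vertices, the number of connected components of the remaining graph is non-zero and less than $\lambda$. $K_\kappa$ is the complete graph on $\kappa$ vertices. A graph $H$ is a minor of $G$ if there are pairwise disjoint non-empty vertex sets $(X_u)_{u\in V_H}$ of $G$, each inducing a connected subgraph, such that for each edge $\{u,v\}$ of $H$ some vertex of $X_u$ is adjacent in $G$ to some vertex of $X_v$. *)

(* Cardinals are represented by types (a cardinal = the
   cardinality of a type); comparisons via injections. *)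
From Stdlib Require Import Relations.

Set Implicit Arguments.

Definition card_le (A B : Type) : Prop :=
  exists f : A -> B, forall x y, f x = f y -> x = y.

Definition card_lt (A B : Type) : Prop := card_le A B /\ ~ card_le B A.

Definition infinite_type (A : Type) : Prop := card_le nat A.

Definition regular (K : Type) : Prop :=
  infinite_type K /\
  forall (I : Type) (F : I -> K -> Prop),
    card_lt I K ->
    (forall i, card_lt {x : K | F i x} K) ->
    exists x : K, forall i, ~ F i x.

Record graph (V : Type) : Type := Graph {
  adj : V -> V -> Prop;
  adj_sym : forall x y, adj x y -> adj y x;
  adj_irrefl : forall x, ~ adj x x
}.

Definition conn_in (V : Type) (G : graph V) (A : V -> Prop) (x y : V) : Prop :=
  A x /\ A y /\
  clos_refl_trans V (fun u v => A u /\ A v /\ adj G u v) x y.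

Definition components (V : Type) (G : graph V) (S : V -> Prop) : Type :=
  { C : V -> Prop |
    exists x, ~ S x /\ C = conn_in G (fun v => ~ S v) x }.

Definition kl_connected (V : Type) (G : graph V) (K L : Type) : Prop :=
  forall S : V -> Prop, card_lt {v : V | S v} K ->
    inhabited (components G S) /\ card_lt (components G S) L.

Definition complete_minor (V : Type) (G : graph V) (K : Type) : Prop :=
  exists X : K -> V -> Prop,
    (forall u, exists x, X u x) /\
    (forall u v x, u <> v -> X u x -> X v x -> False) /\
    (forall u x y, X u x -> X u y -> conn_in G (X u) x y) /\
    (forall u v, u <> v -> exists x y, X u x /\ X v y /\ adj G x y).

(* Call a vertex set small if it has fewer than kappa vertices.  Removing a small
   set leaves fewer than lambda < kappa components, so by regularity one of them
   has kappa vertices.  If every small S0 could be enlarged to a small T splitting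
   a component of G - S0 into two large components of G - T, iterating this along a
   well-order of length lambda and choosing least vertices would produce lambda
   components of G minus one small set; so some small S0 is stable, and it selects
   for every small T a component f T of G - T, decreasing in T.  The same counting
   shows that kappa vertices are attached to f, i.e. lie in f C for every small C
   missing them.  Finally, take by Zorn a maximal family of pairwise disjoint and
   pairwise adjacent small connected sets, each containing an attached vertex.  If
   it had fewer than kappa members, their union S would be small, each member
   would have a neighbour in f S, and small paths in f S joining a fresh attached
   vertex to these neighbours would form a new member.  So the family has kappa
   members: the branch sets of a K_kappa minor. *)

From mathcomp Require Import ssreflect ssrfun ssrbool eqtype.
From mathcomp Require Import boolp classical_sets wochoice.
From Stdlib Require Import Relations Wellfounded.

Set Implicit Arguments.
Unset Strict Implicit.
Local Open Scope classical_set_scope.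

Lemma sig_inj (T : Type) (P : T -> Prop) (u v : {x | P x}) :
  proj1_sig u = proj1_sig v -> u = v.
Proof. by case: u v => x p [y q] /= xy; apply: eq_exist. Qed.

Lemma card_le_trans (A B C : Type) : card_le A B -> card_le B C -> card_le A C.
Proof. by move=> [f f_inj] [g g_inj]; exists (g \o f) => x y /g_inj/f_inj. Qed.

Lemma card_lt_le_trans (A B C : Type) : card_lt A B -> card_le B C -> card_lt A C.
Proof.
move=> [AB nBA] BC; split; first exact: card_le_trans BC.
by move=> CA; apply/nBA/(card_le_trans BC).
Qed.

Lemma card_le_lt_trans (A B C : Type) : card_le A B -> card_lt B C -> card_lt A C.
Proof.
move=> AB [BC nCB]; split; first exact: card_le_trans BC.
by move=> CA; apply/nCB/(card_le_trans CA).
Qed.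

Lemma card_le_sig (A : Type) (P : set A) : card_le {x | P x} A.
Proof. by exists (@proj1_sig _ _) => x y; apply: sig_inj. Qed.

Lemma card_le_sigS (A : Type) (P Q : set A) :
  P `<=` Q -> card_le {x | P x} {x | Q x}.
Proof.
move=> PQ; exists (fun u => exist Q (proj1_sig u) (PQ _ (proj2_sig u))) => u v.
by move/(congr1 (@proj1_sig _ _)) => /=; apply: sig_inj.
Qed.

(* Zorn: a maximal partial injection is total on A or onto B. *)
Lemma card_le_total (A B : Type) : card_le A B \/ card_le B A.
Proof.
pose pinj := [set M : set (A * B) |
  forall p q, M p -> M q -> (p.1 = q.1 <-> p.2 = q.2)].
have [|M [pinjM maxM]] := @Zorn_bigcup _ pinj.
  move=> F Fpinj Ftot p q [X FX Xp] [Y FY Yq].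
  have [XY|YX] := Ftot X Y FX FY.
    exact: (Fpinj Y FY) (XY p Xp) Yq.
  exact: (Fpinj X FX) Xp (YX q Yq).
have [[a0 a0M]|domM] := pselect (exists a, forall b, ~ M (a, b)); last first.
  have /choice[f Mf] : forall a, exists b, M (a, b).
    by move=> a; apply/not_existsP => naM; apply: domM; exists a.
  by left; exists f => x y fxy; apply/(pinjM (x, f x) (y, f y)).
have [[b0 b0M]|codomM] := pselect (exists b, forall a, ~ M (a, b)); last first.
  have /choice[g Mg] : forall b, exists a, M (a, b).
    by move=> b; apply/not_existsP => nbM; apply: codomM; exists b.
  by right; exists g => x y gxy; apply/(pinjM (g x, x) (g y, y)).
exfalso; apply: (maxM (M `|` [set (a0, b0)])).
  split; first by move=> p Mp; left.
  by move=> /(_ (a0, b0) (or_intror erefl)); apply: a0M.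
move=> [a b] [a' b'] [Mab|[-> ->]] [Mab'|[-> ->]] /=.
- exact: (pinjM (a, b) (a', b')).
- by split=> eq; [case: (a0M b); rewrite -eq | case: (b0M a); rewrite -eq].
- by split=> eq; [case: (a0M b'); rewrite eq | case: (b0M a'); rewrite eq].
- by [].
Qed.

Lemma exists_wf_total_order (T : Type) : exists lt : T -> T -> Prop,
  well_founded lt /\ forall x y, lt x y \/ x = y \/ lt y x.
Proof.
elim/Peq: T => T; have [R woR] := well_ordering_principle T.
have woT : wo_chain R predT by move=> A _; apply: woR.
have R_anti := wo_chain_antisymmetric woT.
exists (fun x y => ~~ R y x); split.
  move=> x; apply: contrapT => nAx.
  have [|m [[nAm minm] _]] := woR [pred t | `[< ~ Acc (fun x y => ~~ R y x) t >] ].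
    by exists x; rewrite inE.
  move: nAm; rewrite inE; apply; constructor => y /negP Rmy.
  by apply: contrapT => nAy; apply/Rmy/minm; rewrite inE.
move=> x y; have [Ryx|nRyx] := boolP (R y x); last by left.
have [Rxy|nRxy] := boolP (R x y); last by right; right.
by right; left; apply: R_anti; rewrite ?inE ?Rxy.
Qed.

Definition least (T : Type) (lt : T -> T -> Prop) (A : set T) (m : T) :=
  A m /\ forall y, A y -> ~ lt y m.

Lemma exists_least (T : Type) (lt : T -> T -> Prop) (A : set T) :
  well_founded lt -> (exists x, A x) -> exists m, least lt A m.
Proof.
move=> wf_lt [x Ax]; apply: contrapT => noleast.
elim: (wf_lt x) Ax => {}x _ IH Ax; apply: noleast; exists x; split=> // y Ay ltyx.
exact: IH ltyx Ay.
Qed.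

Lemma least_unique (T : Type) (lt : T -> T -> Prop) (A : set T) m m' :
  (forall x y, lt x y \/ x = y \/ lt y x) -> least lt A m -> least lt A m' -> m = m'.
Proof.
move=> lt_total [Am m_least] [Am' m'_least].
by have [/(m'_least _ Am)|[|/(m_least _ Am')]] := lt_total m m'.
Qed.

Lemma wf_union_rec (I T : Type) (lt : I -> I -> Prop) : well_founded lt ->
  forall (B : set T) (h : set T -> set T), exists R : I -> set T,
  forall i, R i = B `|` [set v | exists2 j, lt j i & h (R j) v].
Proof.
move=> wf_lt B h.
pose F i (rec : forall j, lt j i -> set T) :=
  B `|` [set v | exists j (ji : lt j i), h (rec j ji) v].
exists (Fix wf_lt _ F) => i; rewrite Fix_eq; last first.
  move=> j r r' rr'; congr (_ `|` _); apply/seteqP.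
  by split=> v [k [kj]]; [rewrite rr'|rewrite -rr']; exists k, kj.
apply/seteqP; split=> v [Bv|]; try by left.
  by move=> [j [ji hv]]; right; exists j.
by move=> [j ji hv]; right; exists j, ji.
Qed.

Section Paths.
Variables (V : Type) (G : graph V).
Implicit Types (A B Q S T C D E X Y : set V) (x y z : V).

Lemma conn_refl A x : A x -> conn_in G A x x.
Proof. by move=> Ax; split; [|split] => //; apply: rt_refl. Qed.

Lemma conn_edge A x y : A x -> A y -> adj G x y -> conn_in G A x y.
Proof. by move=> Ax Ay xy; split; [|split] => //; apply: rt_step. Qed.

Lemma conn_sym A x y : conn_in G A x y -> conn_in G A y x.
Proof.
move=> [Ax [Ay xy]]; split; [|split] => //.
elim: xy => [u v [Au [Av uv]]|u|u v w _ vu _ wv].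
- by apply: rt_step; split; [|split] => //; apply: adj_sym.
- exact: rt_refl.
- exact: rt_trans wv vu.
Qed.

Lemma conn_trans A x y z : conn_in G A x y -> conn_in G A y z -> conn_in G A x z.
Proof. by move=> [Ax [_ xy]] [_ [Az yz]]; split; [|split] => //; apply: rt_trans yz. Qed.

Lemma conn_sub A B x y : A `<=` B -> conn_in G A x y -> conn_in G B x y.
Proof.
move=> AB [Ax [Ay xy]]; split; [exact: AB|split; first exact: AB].
elim: xy => [u v [Au [Av uv]]|u|u v w _ uv _ vw].
- by apply: rt_step; split; [|split] => //; apply: AB.
- exact: rt_refl.
- exact: rt_trans vw.
Qed.

Lemma conn_subC S T x y : S `<=` T -> conn_in G (~` T) x y -> conn_in G (~` S) x y.
Proof. by move=> ST; apply: conn_sub => v nTv Sv; apply/nTv/ST. Qed.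

Lemma conn_ind A (P : V -> V -> Prop) :
  (forall x, A x -> P x x) ->
  (forall x y z, A x -> A y -> adj G x y -> conn_in G A y z -> P y z -> P x z) ->
  forall x y, conn_in G A x y -> P x y.
Proof.
move=> Prefl Pstep x y [Ax [Ay /clos_rt_rt1n_iff xy]].
elim: xy Ax Ay => [u Au _|u v w [Au [Av uv]] /clos_rt_rt1n_iff vw IH _ Aw].
  exact: Prefl.
by apply: (Pstep u v w Au Av uv) (IH Av Aw); split; [|split].
Qed.

Lemma conn_setI A Q x y : conn_in G A x y -> Q x ->
  (forall u v, A u -> A v -> adj G u v -> Q u -> Q v) -> conn_in G (A `&` Q) x y.
Proof.
move=> + + Qstep; move: x y; apply: conn_ind => [x Ax Qx|x y z Ax Ay xy _ IH Qx].
  exact: conn_refl.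
have Qy : Q y by apply: Qstep Qx.
by apply: conn_trans (IH Qy); apply: conn_edge.
Qed.

Lemma conn_cross A Q x y : conn_in G A x y -> ~ Q x -> Q y ->
  exists u v, [/\ A u, adj G u v, ~ Q u & Q v].
Proof.
move: x y; apply: conn_ind => [x _ nQx Qx|x y z Ax _ xy _ IH nQx Qz]; first by [].
by have [Qy|nQy] := pselect (Q y); [exists x, y|apply: IH].
Qed.

Definition component S C := exists x, ~ S x /\ C = conn_in G (~` S) x.

Definition connected X := forall x y, X x -> X y -> conn_in G X x y.

Lemma connected_from X a : X a -> (forall y, X y -> conn_in G X a y) -> connected X.
Proof. by move=> Xa aX x y Xx Xy; apply: conn_trans (aX y Xy); apply/conn_sym/aX. Qed.

Definition adjacent X Y := exists x y, [/\ X x, Y y & adj G x y].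

Lemma adjacent_sym X Y : adjacent X Y -> adjacent Y X.
Proof. by move=> [x [y [Xx Yy xy]]]; exists y, x; split=> //; apply: adj_sym. Qed.

Lemma component_of S x : ~ S x -> component S (conn_in G (~` S) x).
Proof. by exists x. Qed.

Lemma component_disjoint S C x : component S C -> C x -> ~ S x.
Proof. by move=> [x0 [_ ->]] [_ []]. Qed.

Lemma component_nonempty S C : component S C -> exists x, C x.
Proof. by move=> [x [Sx ->]]; exists x; apply: conn_refl. Qed.

Lemma component_conn S C x y : component S C -> C x -> C y -> conn_in G (~` S) x y.
Proof. by move=> [x0 [_ ->]] x0x; apply: conn_trans; apply: conn_sym. Qed.

Lemma component_closed S C x y : component S C -> C x -> conn_in G (~` S) x y -> C y.
Proof. by move=> [x0 [_ ->]]; apply: conn_trans. Qed.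

Lemma component_edge S C x y : component S C -> C x -> ~ S y -> adj G x y -> C y.
Proof.
move=> SC Cx nSy xy; apply: (component_closed SC Cx).
by apply: conn_edge => //; apply: component_disjoint SC Cx.
Qed.

Lemma componentE S C x : component S C -> C x -> C = conn_in G (~` S) x.
Proof.
move=> SC Cx; apply/seteqP; split=> y; first exact: component_conn.
exact: component_closed.
Qed.

Lemma component_eq S C D x : component S C -> component S D -> C x -> D x -> C = D.
Proof. by move=> SC SD Cx Dx; rewrite (componentE SC Cx) (componentE SD Dx). Qed.

Lemma component_sub S T D E x :
  S `<=` T -> component T E -> component S D -> E x -> D x -> E `<=` D.
Proof.
move=> ST TE SD Ex Dx y Ey; apply: (component_closed SD Dx).
exact: conn_subC ST (component_conn TE Ex Ey).
Qed.

Lemma component_connected S C : component S C -> connected C.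
Proof.
move=> SC x y Cx Cy; have := conn_setI (component_conn SC Cx Cy) Cx.
move=> /(_ (fun u v _ nSv uv Cu => component_edge SC Cu nSv uv)).
by apply: conn_sub => v [].
Qed.

(* A path starting in C cannot leave C, so it meets X only inside C. *)
Lemma conn_component_setU S C X x y : component S C -> C x ->
  conn_in G (~` (S `|` (X `&` C))) x y -> conn_in G (~` (S `|` X)) x y.
Proof.
move=> SC Cx xy; have := conn_setI xy Cx.
move=> /(_ (fun u v _ nv uv Cu => component_edge SC Cu (fun Sv => nv (or_introl Sv)) uv)).
by apply: conn_sub => v [nv Cv] [Sv|Xv]; apply: nv; [left|right].
Qed.

Definition minor_family (M : set (set V)) :=
  forall X Y, M X -> M Y -> X <> Y -> X `&` Y `<=` set0 /\ adjacent X Y.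

Lemma complete_minor_of_family (K : Type) (M : set (set V)) :
  minor_family M -> (forall X, M X -> connected X /\ exists x, X x) ->
  card_le K {X | M X} -> complete_minor G K.
Proof.
move=> Mfam Mconn [g g_inj]; pose X k := proj1_sig (g k).
have MX k : M (X k) := proj2_sig (g k).
have X_inj u v : u <> v -> X u <> X v by move=> uv /sig_inj/g_inj.
have XuXv u v : u <> v -> X u `&` X v `<=` set0 /\ adjacent (X u) (X v).
  by move=> uv; apply: Mfam (MX u) (MX v) (X_inj u v uv).
exists X; split; first by move=> u; apply: (Mconn _ (MX u)).2.
split; first by move=> u v x /XuXv[disj _] Xux Xvx; apply: (disj x).
split; first by move=> u; apply: (Mconn _ (MX u)).1.
by move=> u v /XuXv[_ [x [y [Xux Xvy xy]]]]; exists x, y.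
Qed.

End Paths.

Section SmallSets.
Variable K : Type.
Hypothesis K_regular : regular K.

Definition small (T : Type) (A : set T) := card_lt {x | A x} K.
Definition large (T : Type) (A : set T) := card_le K {x | A x}.

Section OneType.
Variable T : Type.
Implicit Types A B : set T.

Lemma large_not_small A : large A -> ~ small A.
Proof. by move=> lA [_ nlA]. Qed.

Lemma not_small_large A : ~ small A -> large A.
Proof.
move=> nsA; have [AK|//] := card_le_total {x | A x} K.
by apply: contrapT => nlA; apply: nsA.
Qed.

Lemma small_sub A B : A `<=` B -> small B -> small A.
Proof. by move=> AB; apply/card_le_lt_trans/card_le_sigS. Qed.

Lemma large_sub A B : A `<=` B -> large A -> large B.
Proof. by move=> AB lA; apply: card_le_trans lA (card_le_sigS AB). Qed.

Lemma large_small_diff A B : large A -> small B -> exists2 v, A v & ~ B v.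
Proof.
move=> lA sB; apply: contrapT => AB; apply: (large_not_small lA).
by apply: small_sub sB => v Av; apply: contrapT => nBv; apply: AB; exists v.
Qed.

Lemma small_bigcup (I : Type) (F : I -> set T) :
  card_lt I K -> (forall i, small (F i)) -> small (\bigcup_i F i).
Proof.
move=> IK sF; apply: contrapT => /not_small_large [h h_inj].
pose G i k := F i (proj1_sig (h k)).
have [|k Gk] := K_regular.2 I G IK.
  move=> i; split; first exact: card_le_sig.
  move=> /card_le_trans/(_ (card_le_sigS (fun k (Gk : G i k) => Gk))) KG.
  apply: (proj2 (sF i)); apply: card_le_trans KG _.
  exists (fun u => exist (F i) (proj1_sig (h (proj1_sig u))) (proj2_sig u)).
  move=> u v /(congr1 (@proj1_sig _ _)) /= huv.
  exact/sig_inj/h_inj/sig_inj.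
by have [i _ Fi] := proj2_sig (h k); apply: (Gk i).
Qed.

Lemma card_lt_bool : card_lt bool K.
Proof.
have [f f_inj] := K_regular.1; split.
  by exists (fun b : bool => f (if b then 0 else 1)) => [[] [] // /f_inj].
move=> /(card_le_trans (ex_intro _ f f_inj)) [g g_inj].
case E0: (g 0); case E1: (g 1); case E2: (g 2);
  try (by have := g_inj 0 1 (etrans E0 (esym E1)));
  try (by have := g_inj 0 2 (etrans E0 (esym E2)));
  by have := g_inj 1 2 (etrans E1 (esym E2)).
Qed.

Lemma small_setU A B : small A -> small B -> small (A `|` B).
Proof.
move=> sA sB; have sAB : small (\bigcup_(b : bool) if b then A else B).
  by apply: small_bigcup card_lt_bool _; case.
by apply: small_sub sAB => v [Av|Bv]; [exists true|exists false].
Qed.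

Lemma small_set0 : small (@set0 T).
Proof. by apply: card_le_lt_trans card_lt_bool; exists (fun=> true) => [[]]. Qed.

Lemma small_set1 (x : T) : small [set x].
Proof.
apply: card_le_lt_trans card_lt_bool.
by exists (fun=> true) => u v _; apply: sig_inj; rewrite (proj2_sig u) (proj2_sig v).
Qed.

Lemma small_chain (I : Type) (lt : I -> I -> Prop) (B : set T) (h : set T -> set T) :
  well_founded lt -> card_lt I K -> small B ->
  (forall X, small X -> B `<=` X -> small (h X)) ->
  exists R : I -> set T,
    [/\ forall i, R i = B `|` [set v | exists2 j, lt j i & h (R j) v],
        forall i, small (R i) & small (\bigcup_i h (R i))].
Proof.
move=> wf_lt IK sB sh; have [R R_eq] := wf_union_rec wf_lt B h.
have sR i : small (R i).
  elim: (wf_lt i) => {}i _ IH; rewrite R_eq; apply: small_setU => //.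
  have sH : small (\bigcup_(j : {j | lt j i}) h (R (proj1_sig j))).
    apply: small_bigcup => [|[j ji]]; first exact: card_le_lt_trans (card_le_sig _) IK.
    by apply: sh (IH j ji) _; rewrite R_eq => v Bv; left.
  by apply: small_sub sH => v [j ji hv]; exists (exist _ j ji).
exists R; split=> //; apply: small_bigcup IK _ => i.
by apply: sh (sR i) _; rewrite R_eq => v Bv; left.
Qed.

End OneType.

Section SmallSubgraphs.
Variables (V : Type) (G : graph V).
Implicit Types (D P Y : set V).

Lemma small_path D x y : conn_in G D x y ->
  exists P, [/\ small P, P `<=` D, P y & forall z, P z -> conn_in G P x z].
Proof.
move: x y; apply: conn_ind => [x Dx|x y z Dx Dy xy _ [P [sP PD Pz Pconn]]].
  exists [set x]; split=> [||//|z ->]; [exact: small_set1|by move=> v ->|].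
  by apply: conn_refl.
have Py : P y by have [] := Pconn z Pz.
exists ([set x] `|` P); split=> [||//|w]; first exact: small_setU (small_set1 x) sP.
- by move=> v [->|/PD].
- by right.
move=> [->|Pw]; first by apply: conn_refl; left.
apply: (conn_trans (y := y)); first by apply: conn_edge xy; [left|right].
by apply: conn_sub (Pconn w Pw) => v Pv; right.
Qed.

Lemma small_connected_hull D a (I : Type) (y : I -> V) :
  card_lt I K -> connected G D -> D a -> (forall i, D (y i)) ->
  exists Y, [/\ small Y, Y `<=` D, connected G Y, Y a & forall i, Y (y i)].
Proof.
move=> IK Dconn Da Dy.
have /choice[P Pi] i : exists P, [/\ small P, P `<=` D, P (y i)
    & forall z, P z -> conn_in G P a z].
  exact: small_path (Dconn _ _ Da (Dy i)).
exists ([set a] `|` \bigcup_i P i); split.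
- apply: small_setU (small_set1 a) (small_bigcup IK _) => i; by case: (Pi i).
- by move=> v [->//|[i _ Piv]]; case: (Pi i) => _ PD _ _; apply: PD.
- apply: (@connected_from _ _ _ a) => [|z [->|[i _ Pz]]]; first by left.
    by apply: conn_refl; left.
  case: (Pi i) => _ _ _ Pconn.
  by apply: conn_sub (Pconn z Pz) => v Pv; right; exists i.
- by left.
- by move=> i; right; exists i => //; case: (Pi i).
Qed.

End SmallSubgraphs.

Section Connectivity.
Variables (V L : Type) (G : graph V).
Hypothesis L_lt_K : card_lt L K.
Hypothesis G_conn : kl_connected G K L.
Implicit Types (S T C D E F U W X Y : set V).

Local Notation component := (component G).

Lemma components_lt S : small S -> card_lt (components G S) K.
Proof. by move=> sS; apply: card_lt_le_trans (G_conn sS).2 L_lt_K.1. Qed.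

Lemma connected_pair_in_chain (lt : L -> L -> Prop) S (b : L -> V) :
  (forall i j, lt i j \/ i = j \/ lt j i) -> small S -> (forall i, ~ S (b i)) ->
  exists i j, lt i j /\ conn_in G (~` S) (b i) (b j).
Proof.
move=> lt_total sS nSb; apply: contrapT => nconn.
have [_ [_ nLcomps]] := G_conn sS; apply: nLcomps.
pose g i : components G S := exist _ _ (component_of G (nSb i)).
exists g => i j /(congr1 (@proj1_sig _ _)) /= bij.
have bibj : conn_in G (~` S) (b i) (b j).
  by move: bij => /(congr1 (fun C => C (b j))) /= ->; apply: conn_refl; apply: nSb.
have [ij|[//|ji]] := lt_total i j; case: nconn; first by exists i, j.
by exists j, i; split=> //; apply: conn_sym.
Qed.

Lemma large_setT : large [set: V].
Proof.
by apply: not_small_large => sV; have [[[C [x [nx _]]]] _] := G_conn sV; apply: nx.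
Qed.

Definition large_comp_in T D E := [/\ component T E, large E & E `<=` D].

Lemma exists_large_comp_in S D : small S -> large D -> D `<=` ~` S ->
  (forall x y, D x -> conn_in G (~` S) x y -> D y) -> exists E, large_comp_in S D E.
Proof.
move=> sS lD DS Dclosed; apply: contrapT => noE; apply: (large_not_small lD).
pose F (c : components G S) := [set v | proj1_sig c v /\ proj1_sig c `<=` D].
apply: small_sub (small_bigcup (components_lt sS) (F := F) _).
  move=> v Dv; exists (exist _ _ (component_of G (DS v Dv))) => //=.
  by split=> [|w]; [apply: conn_refl; apply: DS|apply: Dclosed].
move=> [C SC] /=; have [CD|nCD] := pselect (C `<=` D); last first.
  by apply: small_sub sS => v [].
have sC : small C by apply: contrapT => /not_small_large lC; apply: noE; exists C.
by apply: small_sub sC => v [].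
Qed.

Lemma exists_large_component S : small S -> exists E, component S E /\ large E.
Proof.
move=> sS; have [|||E [SE lE _]] := @exists_large_comp_in S (~` S) sS.
- apply: not_small_large => snS; apply: (large_not_small large_setT).
  by apply: small_sub (small_setU sS snS) => v _; apply: EM.
- by [].
- by move=> x y _ [_ []].
by exists E.
Qed.

Lemma large_component_below S T D : small T -> S `<=` T -> component S D -> large D ->
  exists E, large_comp_in T D E.
Proof.
move=> sT ST SD lD; have [|||E [TE lE ED]] := @exists_large_comp_in T (D `\` T) sT.
- apply: not_small_large => sDT; apply: (large_not_small lD).
  apply: small_sub (small_setU sDT sT) => v Dv.
  by have [Tv|nTv] := pselect (T v); [right|left].
- by move=> v [].
- move=> x y [Dx _] xy; split; last by case: xy => _ [].
  exact: component_closed SD Dx (conn_subC ST xy).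
by exists E; split=> // v /ED [].
Qed.

Definition splits S T := exists D E E',
  [/\ component S D, large_comp_in T D E, large_comp_in T D E' & E <> E'].

Definition stable S0 := small S0 /\ forall T, small T -> S0 `<=` T -> ~ splits S0 T.

Section LeastVertices.
Variable ltV : V -> V -> Prop.
Hypothesis ltV_wf : well_founded ltV.
Hypothesis ltV_total : forall x y, ltV x y \/ x = y \/ ltV y x.

(* Taking least vertices forces the a of a later witness to equal the b of an
   earlier one joined to it outside W. *)
Definition split_witness W S T F a b :=
  [/\ component T F, least ltV (F `\` W) b,
      least ltV (conn_in G (~` S) b `\` W) a & ~ F a].

Lemma exists_split_witness W S T : small W -> S `<=` T -> splits S T ->
  exists b F a, split_witness W S T F a b.
Proof.
move=> sW ST [D [E [E' [SD [TE lE ED] [TE' lE' E'D] EE']]]].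
have [e Ee nWe] := large_small_diff lE sW.
have [a [[Da nWa] a_least]] :=
  exists_least (A := D `\` W) ltV_wf (ex_intro _ e (conj (ED e Ee) nWe)).
have [F [TF lF FD nFa]] : exists F, [/\ component T F, large F, F `<=` D & ~ F a].
  have [Ea|nEa] := pselect (E a); last by exists E.
  by exists E'; split=> // E'a; apply/EE'/(component_eq TE TE' Ea E'a).
have [f Ff nWf] := large_small_diff lF sW.
have [b [[Fb nWb] b_least]] :=
  exists_least (A := F `\` W) ltV_wf (ex_intro _ f (conj Ff nWf)).
exists b, F, a; split=> //; rewrite -(componentE SD (FD b Fb)); by split.
Qed.

Lemma split_witnesses_disconnected W S1 T1 F1 a1 b1 S2 T2 F2 a2 b2 :
  T1 `<=` S2 -> S2 `<=` T2 -> T2 `<=` W ->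
  split_witness W S1 T1 F1 a1 b1 -> split_witness W S2 T2 F2 a2 b2 ->
  ~ conn_in G (~` W) b1 b2.
Proof.
move=> T1S2 S2T2 T2W [T1F1 [[F1b1 nWb1] b1_min] _ _] [T2F2 [[F2b2 _] _] a2_least nF2a2].
move=> b1b2; have S2W v : S2 v -> W v by move/S2T2/T2W.
have T1W v : T1 v -> W v by move/T1S2/S2W.
have F1b2 : F1 b2 by apply: component_closed T1F1 F1b1 (conn_subC T1W b1b2).
have D2F1 : conn_in G (~` S2) b2 `<=` F1.
  by move=> y b2y; apply: component_closed T1F1 F1b2 (conn_subC T1S2 b2y).
have b1_least : least ltV (conn_in G (~` S2) b2 `\` W) b1.
  split; first by split=> //; apply: conn_subC S2W (conn_sym b1b2).
  by move=> y [b2y nWy]; apply: b1_min; split=> //; apply: D2F1.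
apply: nF2a2; rewrite (least_unique ltV_total a2_least b1_least).
exact: component_closed T2F2 F2b2 (conn_subC T2W (conn_sym b1b2)).
Qed.

End LeastVertices.

Lemma exists_stable : exists S0, stable S0.
Proof.
apply: contrapT => /forallNP unstable.
have /choice[step stepP] S : exists T, small S -> [/\ small T, S `<=` T & splits S T].
  have [sS|nsS] := pselect (small S); last by exists S.
  have /existsNP[T] : ~ forall T, small T -> S `<=` T -> ~ splits S T.
    by move=> noT; apply: (unstable S).
  by move=> /not_implyP[sT /not_implyP[ST /contrapT spl]]; exists T.
have [ltL [ltL_wf ltL_total]] := exists_wf_total_order L.
have [|R [R_eq sR sW]] := small_chain ltL_wf L_lt_K (small_set0 V) (h := step).
  by move=> X sX _; case: (stepP X sX).
set W := \bigcup_i step (R i) in sW.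
have step_R j i : ltL j i -> step (R j) `<=` R i.
  by move=> ji v Rjv; rewrite R_eq; right; exists j.
have [ltV [ltV_wf ltV_total]] := exists_wf_total_order V.
have /choice[b wit] i : exists b F a, split_witness ltV W (R i) (step (R i)) F a b.
  by have [_ RT spl] := stepP _ (sR i); apply: exists_split_witness.
have [|i [j [ij bibj]]] := connected_pair_in_chain ltL_total sW (b := b).
  by move=> i; have [F [a [_ [[_ nWb] _] _ _]]] := wit i.
have [F1 [a1 wit_i]] := wit i; have [F2 [a2 wit_j]] := wit j.
have [_ R_step _] := stepP _ (sR j).
have step_W : step (R j) `<=` W by move=> v stepv; exists j.
apply: (split_witnesses_disconnected ltV_total (step_R _ _ ij) R_step step_W wit_i wit_j).
exact: bibj.
Qed.

Definition direction (f : set V -> set V) :=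
  (forall T, small T -> component T (f T)) /\
  (forall T T', small T' -> T `<=` T' -> f T' `<=` f T).

Lemma exists_direction : exists f, direction f.
Proof.
have [S0 [sS0 S0_stable]] := exists_stable.
have [D0 [S0D0 lD0]] := exists_large_component sS0.
have E_unique T E E' : small T ->
    large_comp_in (T `|` S0) D0 E -> large_comp_in (T `|` S0) D0 E' -> E = E'.
  move=> sT E_in E'_in; apply: contrapT => EE'.
  by apply: (S0_stable _ (small_setU sT sS0) (@subsetUr _ T S0)); exists D0, E, E'.
exists (fun T => [set v | exists2 E, large_comp_in (T `|` S0) D0 E &
                            exists2 x, E x & conn_in G (~` T) x v]).
split=> [T sT|T T' sT' TT' v [E' [TE' lE' E'D0] [x E'x xv]]].
  have [E E_in] := large_component_below (small_setU sT sS0) (@subsetUr _ T S0) S0D0 lD0.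
  have [TE _ _] := E_in; have [x Ex] := component_nonempty TE.
  have nTx : ~ T x by move=> Tx; apply: (component_disjoint TE Ex); left.
  exists x; split=> //; apply/seteqP; split=> [v [E' E'_in [x' E'x' x'v]]|v xv].
    move: E'x'; rewrite -(E_unique T E E' sT E_in E'_in) => Ex'.
    exact: conn_trans (conn_subC (@subsetUl _ T S0) (component_conn TE Ex Ex')) x'v.
  by exists E => //; exists x.
have nTx : ~ (T `|` S0) x.
  by move=> [Tx|S0x]; apply: (component_disjoint TE' E'x); [left; apply: TT'|right].
have TE := component_of G nTx; have Ex : conn_in G (~` (T `|` S0)) x x := conn_refl G nTx.
have E'E := component_sub (setSU TT') TE' TE E'x Ex.
exists (conn_in G (~` (T `|` S0)) x); last by exists x => //; apply: conn_subC TT' xv.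
split=> //; first exact: large_sub E'E lE'.
exact: component_sub (@subsetUr _ T S0) TE S0D0 Ex (E'D0 x E'x).
Qed.

Section Direction.
Variable f : set V -> set V.
Hypothesis f_direction : direction f.

Let f_comp T : small T -> component T (f T). Proof. exact: f_direction.1. Qed.
Let f_mono T T' : small T' -> T `<=` T' -> f T' `<=` f T. Proof. exact: f_direction.2. Qed.

Definition attached v := forall C, small C -> ~ C v -> f C v.

Lemma direction_escape T C v : small T -> small C -> f T v -> ~ C v -> ~ f C v ->
  ~ f (T `|` (C `&` f T)) v.
Proof.
move=> sT sC fTv nCv nfCv fUv; pose U := T `|` (C `&` f T).
have sTC := small_setU sT sC.
have UTC : U `<=` T `|` C := setUS (@subIsetl _ C (f T)).
have sU : small U := small_sub UTC sTC.
have [w fTCw] := component_nonempty (f_comp sTC).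
have vw := component_conn (f_comp sU) fUv (f_mono sTC UTC fTCw).
have wv := conn_sym (conn_component_setU (f_comp sT) fTv vw).
apply/nfCv/(f_mono sTC (@subsetUr _ T C)).
exact: component_closed (f_comp sTC) fTCw wv.
Qed.

Lemma exists_escaping_vertex T : small T -> attached `<=` T ->
  exists v C, [/\ f T v, small C, ~ C v & ~ f C v].
Proof.
move=> sT AT; have [v fTv] := component_nonempty (f_comp sT).
have /existsNP[C] : ~ attached v by move=> /AT; apply: component_disjoint (f_comp sT) fTv.
by move=> /not_implyP[sC /not_implyP[nCv nfCv]]; exists v, C.
Qed.

Lemma chain_in_direction (I : Type) (lt : I -> I -> Prop) B (U : set V -> set V)
    (R : I -> set V) :
  well_founded lt -> (forall i j, lt i j \/ i = j \/ lt j i) ->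
  (forall X, X `<=` U X) -> (forall X, U X `<=` X `|` f X) -> (forall i, small (R i)) ->
  (forall i, R i = B `|` [set v | exists2 j, lt j i & U (R j) v]) ->
  forall j k, lt j k -> R k `<=` U (R j) `|` f (U (R j)).
Proof.
move=> lt_wf lt_total XU UXf sR R_eq j k; elim: (lt_wf k) j => {}k _ IH j jk x.
have UR j' : lt j' j -> U (R j') `<=` U (R j).
  by move=> j'j y Uy; apply: XU; rewrite R_eq; right; exists j'.
rewrite {1}R_eq => -[Bx|[j' j'k Uj'x]].
  by left; apply: XU; rewrite R_eq; left.
have [j'j|[j'j|jj']] := lt_total j' j.
- by left; apply: UR j'j _ Uj'x.
- by left; rewrite -j'j.
case/UXf: Uj'x => [Rj'x|fRj'x]; first exact: IH j' j'k j jj' x Rj'x.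
by right; apply: f_mono (sR j') _ _ fRj'x => y Uy; rewrite R_eq; right; exists j.
Qed.

(* Were the attached vertices few, the chain T |-> T ∪ (C_T ∩ f T) along L would
   yield |L| vertices v i that a small set separates pairwise. *)
Lemma large_attached : large attached.
Proof.
apply: not_small_large => sA; have [v0 _] := component_nonempty (f_comp sA).
have /choice[vC vCP] T : exists p : V * set V, small T -> attached `<=` T ->
    [/\ f T p.1, small p.2, ~ p.2 p.1 & ~ f p.2 p.1].
  have [[sT AT]|nTA] := pselect (small T /\ attached `<=` T).
    by have [v [C vC]] := exists_escaping_vertex sT AT; exists (v, C).
  by exists (v0, T) => sT AT; case: nTA.
pose U T := T `|` ((vC T).2 `&` f T).
have sU T : small T -> attached `<=` T -> small (U T).
  move=> sT AT; have [_ sC _ _] := vCP T sT AT.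
  exact: small_setU sT (small_sub (@subIsetl _ _ _) sC).
have [ltL [ltL_wf ltL_total]] := exists_wf_total_order L.
have [R [R_eq sR sW]] := small_chain ltL_wf L_lt_K sA sU.
have later := chain_in_direction (U := U) ltL_wf ltL_total (fun X => @subsetUl _ X _)
  (fun X => setUS (@subIsetr _ _ _)) sR R_eq.
have AR i : attached `<=` R i by rewrite R_eq => v Av; left.
have UR j i : ltL j i -> U (R j) `<=` R i by move=> ji v Ujv; rewrite R_eq; right; exists j.
pose v i := (vC (R i)).1; pose C i := (vC (R i)).2.
have vP i : [/\ f (R i) (v i), small (C i), ~ C i (v i) & ~ f (C i) (v i)].
  exact: vCP _ (sR i) (AR i).
have escape i : ~ f (U (R i)) (v i) by case: (vP i) => *; apply: direction_escape.
have nWv i : ~ (\bigcup_k U (R k)) (v i).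
  have [fRv _ nCv _] := vP i.
  have nUv : ~ U (R i) (v i).
    by move=> [/(component_disjoint (f_comp (sR i)) fRv)|[/nCv]].
  move=> [k _ Ukv]; have [ki|[ki|ik]] := ltL_total k i.
  - by apply: nUv; left; apply: UR ki _ Ukv.
  - by move: Ukv; rewrite ki.
  - case: Ukv => [/(later _ _ ik)[//|/escape]|[_ fRkv]] //.
    exact/(escape i)/(f_mono (sR k) (UR _ _ ik)).
have [i [k [ik vivk]]] := connected_pair_in_chain ltL_total sW nWv.
have sUR : small (U (R i)) := sU _ (sR i) (AR i).
apply: (escape i) (component_closed (f_comp sUR) _ (conn_sym (conn_subC _ vivk))).
  by case: (vP k) => fRkv _ _ _; apply: f_mono (sR k) (UR _ _ ik) _ fRkv.
by move=> x Uix; exists i.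
Qed.

Definition branch_set X := [/\ small X, connected G X & exists2 a, attached a & X a].

Lemma attached_adjacent S X a : small S -> X `<=` S -> attached a -> X a ->
  adjacent G X (f S).
Proof.
move=> sS XS Aa Xa.
have SX_S : S `\` X `<=` S := @subDsetl _ S X.
have sSX := small_sub SX_S sS.
have fSXa : f (S `\` X) a by apply: Aa sSX _ => -[_ /(_ Xa)].
have [w fSw] := component_nonempty (f_comp sS).
have nfSa : ~ f S a by move=> /(component_disjoint (f_comp sS)); apply; apply: XS.
have aw := component_conn (f_comp sSX) fSXa (f_mono sS SX_S fSw).
have [u [u' [nSXu uu' nfSu fSu']]] := conn_cross aw nfSa fSw.
exists u, u'; split=> //; apply: contrapT => nXu; apply: nfSu.
apply: component_edge (f_comp sS) fSu' _ (adj_sym _ _ _ uu').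
by move=> Su; apply: nSXu.
Qed.

Lemma extend_minor_family M :
  minor_family G M -> (forall X, M X -> branch_set X) -> card_lt {X | M X} K ->
  exists Y, [/\ branch_set Y, ~ M Y & minor_family G (M `|` [set Y])].
Proof.
move=> Mfam Mbranch MK; pose S := \bigcup_(X : {X | M X}) proj1_sig X.
have sS : small S by apply: small_bigcup MK _ => -[X MX]; case: (Mbranch X MX).
have XS X : M X -> X `<=` S by move=> MX v Xv; exists (exist _ X MX).
have /choice[edge edgeP] (X : {X | M X}) :
    exists p : V * V, proj1_sig X p.1 /\ f S p.2 /\ adj G p.1 p.2.
  case: X => X MX; have [_ _ [a Aa Xa]] := Mbranch X MX.
  by have [x [y [Xx fSy xy]]] := attached_adjacent sS (XS X MX) Aa Xa; exists (x, y).
have [a0 Aa0 nSa0] := large_small_diff large_attached sS.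
have [Y [sY YfS Yconn Ya0 Yy]] := small_connected_hull MK
  (component_connected (f_comp sS)) (Aa0 S sS nSa0) (fun i => (edgeP i).2.1).
have YS : Y `&` S `<=` set0.
  by move=> v [/YfS fSv Sv]; apply: component_disjoint (f_comp sS) fSv Sv.
have MY X : M X -> X `&` Y `<=` set0 /\ adjacent G X Y.
  move=> MX; split=> [v [Xv Yv]|]; first by apply: (YS v); split=> //; apply: XS Xv.
  have [Xx [_ xy]] := edgeP (exist _ X MX).
  by exists (edge (exist _ X MX)).1, (edge (exist _ X MX)).2; split=> //; apply: Yy.
exists Y; split.
- by split=> //; exists a0.
- by move=> /XS/(_ a0 Ya0).
move=> X X' [MX|->] [MX'|->] XX'.
- exact: Mfam.
- exact: MY.
- by rewrite setIC; have [? /adjacent_sym] := MY X' MX'.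
- by [].
Qed.

Lemma complete_minor_of_direction : complete_minor G K.
Proof.
pose P := [set M | minor_family G M /\ forall X, M X -> branch_set X].
have [|M [[Mfam Mbranch] Mmax]] := @Zorn_bigcup _ P.
  move=> F FP Ftot; split=> [X X' [M FM MX] [M' FM' M'X'] XX'|X [M FM MX]].
    have [MM'|M'M] := Ftot M M' FM FM'.
    - exact: (FP M' FM').1 X X' (MM' X MX) M'X' XX'.
    - exact: (FP M FM).1 X X' MX (M'M X' M'X') XX'.
  exact: (FP M FM).2 X MX.
have [KM|nKM] := pselect (card_le K {X | M X}).
  apply: complete_minor_of_family Mfam _ KM => X /Mbranch[_ Xconn [a _ Xa]].
  by split=> //; exists a.
have MK : card_lt {X | M X} K by split=> //; case: (card_le_total {X | M X} K).
have [Y [bY nMY Yfam]] := extend_minor_family Mfam Mbranch MK.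
exfalso; apply: (Mmax (M `|` [set Y])); last by split=> // X [/Mbranch|->].
by split=> [X MX|/(_ Y (or_intror erefl))]; [left|].
Qed.
End Direction.

End Connectivity.

End SmallSets.

Theorem mainTheorem9 (K : Type) (V : Type) (G : graph V) :
  regular K ->
  (exists L : Type, infinite_type L /\ card_lt L K /\ kl_connected G K L) ->
  complete_minor G K.
Proof.
move=> K_regular [L [_ [L_lt_K G_conn]]].
have [f f_dir] := exists_direction K_regular L_lt_K G_conn.
exact: (complete_minor_of_direction K_regular L_lt_K G_conn f_dir).
Qed.
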